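(* Work in the upper half-space model $\{(x,y,z): z>0\}$ of $\mathbb{H}^3$, where the height of a point $(x,y,z)$ is $\log z$. Let $\gamma$ be a non-vertical geodesic whose highest point has height $0$, and let $v_0 \in N^1(\gamma)$ be the unit normal vector to $\gamma$ based at its highest point and pointing straight up. Let $v \in N^1(\gamma)$, let $h$ be the height of the highest point of the geodesic ray starting at $v$, and write $v - v_0 = x + i\theta \in \mathbb{C}/2\pi i\mathbb{Z}$ with $|\theta| \le \pi$. Then $|x| < 2e^{-h}$ always, and $|\theta| \le 2e^{-h}$ whenever $h > 0$.
   Context: $N^1(\gamma)$ is the unit normal bundle of $\gamma$; it is a torsor for $\mathbb{C}/2\pi i\mathbb{Z}$, where the real part translates the base point along $\gamma$ (signed distance) and the imaginary part rotates the normal vector about $\gamma$. For $v, v_0 \in N^1(\gamma)$, $v - v_0$ denotes the unique element of $\mathbb{C}/2\pi i\mathbb{Z}$ carrying $v_0$ to $v$. *)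

From Stdlib Require Import Reals Lra.
Open Scope R_scope.

(** A tangent vector at a point p is
    recorded by its Euclidean direction (a Euclidean unit vector); the
    hyperbolic unit vector is z_p times it (the metric is conformal). *)
Definition point := (R * R * R)%type.
Definition px (p : point) : R := fst (fst p).
Definition py (p : point) : R := snd (fst p).
Definition pz (p : point) : R := snd p.
Definition height (p : point) : R := ln (pz p).

Record tvec := TVec { bp : point ; dir : R * R * R }.

(** A non-vertical geodesic gamma whose highest point has height 0 is a
    Euclidean semicircle of radius 1, centred at (c1, c2, 0), lying in the
    vertical plane with horizontal unit direction e = (cos phi, sin phi).
    Its arclength (signed distance) parametrisation with the highest point
    at s = 0 is s |-> (c + tanh s * e, 1 / cosh s). *)
Definition gamma_pt (c1 c2 phi s : R) : point :=
  (c1 + tanh s * cos phi, c2 + tanh s * sin phi, / cosh s).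

Definition v0 (c1 c2 phi : R) : tvec := TVec (gamma_pt c1 c2 phi 0) (0, 0, 1).

(** Along gamma the fields
      N1(s) = (tanh s * e, 1 / cosh s)   (in-plane normal, N1(0) = straight up)
      N2    = (e_perp, 0),  e_perp = (-sin phi, cos phi)
    form a parallel orthonormal (Euclidean-direction) frame of the normal
    bundle (N2 is the normal of the totally geodesic vertical plane
    containing gamma).  Hence v0 + (x + i theta) is the unit normal based at
    gamma(x) with direction cos theta * N1(x) + sin theta * N2.
    (The orientation of theta is a convention; it is irrelevant below.) *)
Definition nb_shift (c1 c2 phi x theta : R) : tvec :=
  TVec (gamma_pt c1 c2 phi x)
    (cos theta * (tanh x * cos phi) + sin theta * (- sin phi),
     cos theta * (tanh x * sin phi) + sin theta * cos phi,
     cos theta * / cosh x).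

(** Geodesics of the upper half-space model are vertical half-lines and
    semicircles orthogonal to the boundary plane.
    - If the direction is vertical, the ray is the vertical half-line going
      up (u3 > 0) or down (u3 < 0).
    - Otherwise, with ehat = horizontal direction normalised, the ray lies on
      the semicircle in the vertical plane through p spanned by ehat, centred
      at c0 on the boundary, of radius Rr; writing points as
      (c0 + w * ehat, sqrt (Rr^2 - w^2)), p corresponds to w = wp and the
      ray is the arc wp <= w < Rr (moving in direction ehat). Here
      wp = - z u3 / |u_h| (so that c0 -> p is orthogonal to u),
      Rr = sqrt (wp^2 + z^2). *)
Definition geod_ray (v : tvec) (q : point) : Prop :=
  let a := px (bp v) in let b := py (bp v) in let z := pz (bp v) in
  let u1 := fst (fst (dir v)) in let u2 := snd (fst (dir v)) in
  let u3 := snd (dir v) in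
  let nh := sqrt (u1 ^ 2 + u2 ^ 2) in
  if Req_EM_T nh 0 then
    px q = a /\ py q = b /\
    ((0 < u3 /\ z <= pz q) \/ (u3 < 0 /\ 0 < pz q /\ pz q <= z))
  else
    let e1 := u1 / nh in let e2 := u2 / nh in
    let wp := - (z * u3) / nh in
    let c01 := a - wp * e1 in let c02 := b - wp * e2 in
    let Rr := sqrt (wp ^ 2 + z ^ 2) in
    exists w, wp <= w < Rr /\
      q = (c01 + w * e1, c02 + w * e2, sqrt (Rr ^ 2 - w ^ 2)).

Definition highest_point (S : point -> Prop) (q : point) : Prop :=
  S q /\ forall q', S q' -> pz q' <= pz q.

(* The ray starting at v lies on a semicircle of Euclidean radius z / |u_h|, where
   z = 1 / cosh x is the Euclidean height of the base point gamma(x) and u_h is the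
   horizontal part of the direction of v; in the parallel frame along gamma one computes
   cosh x * |u_h| = sqrt (sinh x ^ 2 + sin theta ^ 2).  So every point of the ray, not only
   the highest one, has e^h <= 1 / sqrt (sinh x ^ 2 + sin theta ^ 2).  Then |x| < 2 |sinh x|
   gives the first bound; if the ray rises above height 0 it must start upwards
   (cos theta >= 0), so |theta| <= PI / 2 and |theta| <= 2 |sin theta| gives the second. *)

From Stdlib Require Import Reals Lra Psatz.
Open Scope R_scope.

Lemma cosh_sq x : cosh x ^ 2 = 1 + sinh x ^ 2.
Proof.
  unfold cosh, sinh. rewrite exp_Ropp. pose proof (exp_pos x). field. lra.
Qed.

Lemma cosh_ge_1 x : 1 <= cosh x.
Proof.
  assert (0 < cosh x) by (unfold cosh; pose proof (exp_pos x); pose proof (exp_pos (- x)); lra).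
  pose proof (cosh_sq x). nra.
Qed.

Lemma Rabs_lt_2_Rabs_sinh x : x <> 0 -> Rabs x < 2 * Rabs (sinh x).
Proof.
  intros x_neq0. unfold sinh.
  pose proof (exp_ineq1 x x_neq0). pose proof (exp_ineq1 (- x) ltac:(lra)).
  pose proof (exp_pos x). pose proof (exp_pos (- x)).
  assert (exp (- x) * exp x = 1) by (rewrite <- exp_plus, Rplus_opp_l; apply exp_0).
  destruct (Rle_dec 0 x).
  - rewrite (Rabs_right x) by lra. rewrite Rabs_right; nra.
  - rewrite (Rabs_left x) by lra. rewrite Rabs_left; nra.
Qed.

Lemma sin_ge_5_6 a : 0 <= a <= 1 -> 5 / 6 * a <= sin a.
Proof.
  intros Ha.
  assert (sin_lb a <= sin a) by (apply SIN; pose proof PI2_1; lra).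
  assert (sin_lb a = a - a ^ 3 / 6 + a ^ 5 / 120 - a ^ 7 / 5040)
    by (unfold sin_lb, sin_approx, sin_term; simpl; field).
  assert (0 <= a ^ 5) by (apply pow_le; lra).
  assert (a ^ 2 <= 1) by nra.
  assert (a ^ 7 <= a ^ 5) by (replace (a ^ 7) with (a ^ 5 * a ^ 2) by ring; nra).
  nra.
Qed.

(* sin t = 2 sin (t/2) cos (t/2) with t/2 <= PI/4 <= 1 and cos (t/2) ^ 2 = (1 + cos t) / 2 >= 1/2. *)
Lemma le_2_sin t : 0 <= t <= PI -> 0 <= cos t -> t <= 2 * sin t.
Proof.
  intros Ht cos_ge0.
  assert (t <= PI / 2).
  { destruct (Rle_dec t (PI / 2)); [easy |].
    pose proof (cos_lt_0 t ltac:(lra) ltac:(pose proof PI_RGT_0; lra)). lra. }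
  pose proof (sin_ge_5_6 (t / 2) ltac:(pose proof PI_4; lra)).
  assert (0 <= cos (t / 2)) by (apply cos_ge_0; pose proof PI_RGT_0; lra).
  pose proof (cos_2a_cos (t / 2)) as cos_half_sq.
  replace (2 * (t / 2)) with t in cos_half_sq by field.
  replace t with (2 * (t / 2)) at 2 by field.
  rewrite sin_2a. nra.
Qed.

Lemma Rabs_le_2_Rabs_sin t : - PI <= t <= PI -> 0 <= cos t -> Rabs t <= 2 * Rabs (sin t).
Proof.
  intros Ht cos_ge0. destruct (Rle_dec 0 t).
  - pose proof (le_2_sin t ltac:(lra) cos_ge0). pose proof (Rle_abs (sin t)).
    rewrite Rabs_right; lra.
  - pose proof (le_2_sin (- t) ltac:(lra) ltac:(rewrite cos_neg; lra)).
    pose proof (Rle_abs (- sin t)). rewrite sin_neg in *. rewrite Rabs_Ropp in *.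
    rewrite Rabs_left; lra.
Qed.

Lemma Rabs_le_sqrt_sum_sq a b : Rabs a <= sqrt (a ^ 2 + b ^ 2).
Proof. rewrite <- sqrt_Rsqr_abs. apply sqrt_le_1_alt. unfold Rsqr. nra. Qed.

Lemma sqrt_diff_sq_le r w : 0 <= r -> sqrt (r ^ 2 - w ^ 2) <= r.
Proof.
  intros r_ge0. rewrite <- (sqrt_pow2 r r_ge0) at 2. apply sqrt_le_1_alt. nra.
Qed.

Section SemicircleArc.
Variables wp z w : R.
Hypothesis z_pos : 0 < z.
Hypothesis w_range : wp <= w < sqrt (wp ^ 2 + z ^ 2).

Lemma arc_height_pos : 0 < sqrt (sqrt (wp ^ 2 + z ^ 2) ^ 2 - w ^ 2).
Proof.
  pose proof (pow2_sqrt (wp ^ 2 + z ^ 2) ltac:(nra)).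
  pose proof (sqrt_pos (wp ^ 2 + z ^ 2)).
  set (r := sqrt (wp ^ 2 + z ^ 2)) in *.
  assert (- r < wp) by nra.
  apply sqrt_lt_R0. nra.
Qed.

Lemma arc_height_le_of_nonneg : 0 <= wp -> sqrt (sqrt (wp ^ 2 + z ^ 2) ^ 2 - w ^ 2) <= z.
Proof.
  intros wp_ge0. rewrite pow2_sqrt by nra.
  rewrite <- (sqrt_pow2 z) at 2 by lra. apply sqrt_le_1_alt. nra.
Qed.

End SemicircleArc.

Lemma arc_radius_mul_hnorm z u3 nh : 0 < z -> 0 < nh -> nh ^ 2 + u3 ^ 2 = 1 ->
  sqrt ((- (z * u3) / nh) ^ 2 + z ^ 2) * nh = z.
Proof.
  intros z_pos nh_pos unit.
  assert (radius_sq : ((- (z * u3) / nh) ^ 2 + z ^ 2) * nh ^ 2 = z ^ 2).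
  { transitivity (z ^ 2 * (nh ^ 2 + u3 ^ 2)); [field; lra | rewrite unit; ring]. }
  pose proof (pow2_sqrt ((- (z * u3) / nh) ^ 2 + z ^ 2) ltac:(nra)).
  pose proof (sqrt_pos ((- (z * u3) / nh) ^ 2 + z ^ 2)).
  apply Rsqr_inj; unfold Rsqr; nra.
Qed.

Definition hnorm (u : R * R * R) : R := sqrt (fst (fst u) ^ 2 + snd (fst u) ^ 2).

Definition unit_dir (u : R * R * R) : Prop := fst (fst u) ^ 2 + snd (fst u) ^ 2 + snd u ^ 2 = 1.

Section GeodesicRay.
Variables (v : tvec) (q : point).
Hypothesis base_pos : 0 < pz (bp v).
Hypothesis ray_q : geod_ray v q.

Lemma geod_ray_pz_pos : 0 < pz q.
Proof.
  revert ray_q. unfold geod_ray. destruct Req_EM_T.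
  - lra.
  - intros (w & w_range & ->). exact (arc_height_pos _ _ _ base_pos w_range).
Qed.

Lemma geod_ray_pz_le_of_down : snd (dir v) <= 0 -> pz q <= pz (bp v).
Proof.
  intros down. revert ray_q. unfold geod_ray. destruct Req_EM_T as [| nh_neq0].
  - lra.
  - intros (w & w_range & ->). apply (arc_height_le_of_nonneg _ _ _ base_pos w_range).
    pose proof (sqrt_pos (fst (fst (dir v)) ^ 2 + snd (fst (dir v)) ^ 2)).
    unfold Rdiv. apply Rmult_le_pos; [nra |].
    apply Rlt_le, Rinv_0_lt_compat. lra.
Qed.

Lemma geod_ray_pz_mul_hnorm_le : unit_dir (dir v) -> pz q * hnorm (dir v) <= pz (bp v).
Proof.
  intros unit. revert ray_q. unfold geod_ray, hnorm. destruct Req_EM_T as [-> | nh_neq0].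
  - lra.
  - intros (w & w_range & ->). cbn [pz snd].
    pose proof (sqrt_pos (fst (fst (dir v)) ^ 2 + snd (fst (dir v)) ^ 2)) as nh_ge0.
    pose proof (pow2_sqrt (fst (fst (dir v)) ^ 2 + snd (fst (dir v)) ^ 2) ltac:(nra)).
    set (nh := sqrt (fst (fst (dir v)) ^ 2 + snd (fst (dir v)) ^ 2)) in *.
    unfold unit_dir in unit.
    eapply Rle_trans.
    + apply Rmult_le_compat_r, sqrt_diff_sq_le, sqrt_pos. exact nh_ge0.
    + rewrite arc_radius_mul_hnorm by lra. lra.
Qed.

End GeodesicRay.

Lemma nb_shift_hnorm_sq c1 c2 phi x theta :
  hnorm (dir (nb_shift c1 c2 phi x theta)) ^ 2 = (cos theta * tanh x) ^ 2 + sin theta ^ 2.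
Proof.
  unfold hnorm. cbn [nb_shift dir fst snd].
  pose proof (sin2_cos2 phi) as unit_phi. unfold Rsqr in unit_phi.
  rewrite pow2_sqrt by nra.
  transitivity (((cos theta * tanh x) ^ 2 + sin theta ^ 2) * (sin phi * sin phi + cos phi * cos phi));
    [ring | rewrite unit_phi; ring].
Qed.

Lemma nb_shift_unit_dir c1 c2 phi x theta : unit_dir (dir (nb_shift c1 c2 phi x theta)).
Proof.
  pose proof (nb_shift_hnorm_sq c1 c2 phi x theta) as hnorm_sq. unfold hnorm in hnorm_sq.
  rewrite pow2_sqrt in hnorm_sq by nra.
  unfold unit_dir. rewrite hnorm_sq. cbn [nb_shift dir snd].
  pose proof (cosh_ge_1 x). pose proof (sin2_cos2 theta). unfold tanh, Rsqr in *.
  transitivity (cos theta ^ 2 * ((1 + sinh x ^ 2) / cosh x ^ 2) + sin theta ^ 2); [field; lra |].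
  rewrite <- cosh_sq. field_simplify; [nra | lra].
Qed.

Lemma cosh_mul_nb_shift_hnorm c1 c2 phi x theta :
  cosh x * hnorm (dir (nb_shift c1 c2 phi x theta)) = sqrt (sinh x ^ 2 + sin theta ^ 2).
Proof.
  pose proof (nb_shift_hnorm_sq c1 c2 phi x theta) as hnorm_sq.
  pose proof (cosh_ge_1 x). pose proof (cosh_sq x). pose proof (sin2_cos2 theta).
  assert (0 <= hnorm (dir (nb_shift c1 c2 phi x theta))) by apply sqrt_pos.
  rewrite <- (sqrt_pow2 (cosh x * _)) by nra. f_equal.
  rewrite Rpow_mult_distr, hnorm_sq. unfold tanh, Rsqr in *. field_simplify; nra.
Qed.

Lemma nb_shift_base_pos c1 c2 phi x theta : 0 < pz (bp (nb_shift c1 c2 phi x theta)).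
Proof. apply Rinv_0_lt_compat. pose proof (cosh_ge_1 x). lra. Qed.

Lemma geod_ray_nb_shift_pz_bound c1 c2 phi x theta q :
  geod_ray (nb_shift c1 c2 phi x theta) q -> pz q * sqrt (sinh x ^ 2 + sin theta ^ 2) <= 1.
Proof.
  intros ray_q. rewrite <- (cosh_mul_nb_shift_hnorm c1 c2 phi).
  pose proof (geod_ray_pz_mul_hnorm_le _ _ (nb_shift_base_pos c1 c2 phi x theta) ray_q
    (nb_shift_unit_dir c1 c2 phi x theta)) as bound.
  cbn [nb_shift bp gamma_pt pz snd] in bound.
  pose proof (cosh_ge_1 x).
  replace 1 with (cosh x * / cosh x) by (field; lra).
  rewrite Rmult_comm, Rmult_assoc, (Rmult_comm _ (pz q)).
  apply Rmult_le_compat_l; lra.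
Qed.

Lemma geod_ray_nb_shift_pz_le_1 c1 c2 phi x theta q :
  geod_ray (nb_shift c1 c2 phi x theta) q -> cos theta <= 0 -> pz q <= 1.
Proof.
  intros ray_q cos_le0. pose proof (cosh_ge_1 x).
  assert (/ cosh x <= 1) by (rewrite <- Rinv_1; apply Rinv_le_contravar; lra).
  assert (0 < / cosh x) by (apply Rinv_0_lt_compat; lra).
  enough (pz q <= pz (bp (nb_shift c1 c2 phi x theta))) by (cbn [nb_shift bp gamma_pt pz snd] in *; lra).
  apply (geod_ray_pz_le_of_down _ _ (nb_shift_base_pos c1 c2 phi x theta) ray_q).
  cbn [nb_shift dir snd]. nra.
Qed.

Theorem lemma5p8 (c1 c2 phi : R) (v : tvec) (x theta : R) (q : point) :
  - PI <= theta <= PI ->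
  v = nb_shift c1 c2 phi x theta ->
  highest_point (geod_ray v) q ->
  Rabs x < 2 * exp (- height q) /\
  (0 < height q -> Rabs theta <= 2 * exp (- height q)).
Proof.
  intros theta_range -> [ray_q _].
  pose proof (geod_ray_pz_pos _ _ (nb_shift_base_pos c1 c2 phi x theta) ray_q) as q_pos.
  assert (bound : sqrt (sinh x ^ 2 + sin theta ^ 2) <= exp (- height q)).
  { unfold height. rewrite exp_Ropp, exp_ln by exact q_pos.
    pose proof (geod_ray_nb_shift_pz_bound _ _ _ _ _ _ ray_q).
    apply (Rmult_le_reg_l (pz q)); [exact q_pos |]. rewrite Rinv_r; lra. }
  split.
  - destruct (Req_dec x 0) as [-> | x_neq0].
    + rewrite Rabs_R0. pose proof (exp_pos (- height q)). lra.
    + pose proof (Rabs_lt_2_Rabs_sinh x x_neq0).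
      pose proof (Rabs_le_sqrt_sum_sq (sinh x) (sin theta)). lra.
  - intros height_pos.
    assert (cos_ge0 : 0 <= cos theta).
    { destruct (Rle_dec 0 (cos theta)) as [| cos_neg]; [easy | exfalso].
      pose proof (geod_ray_nb_shift_pz_le_1 _ _ _ _ _ _ ray_q ltac:(lra)).
      unfold height in height_pos. rewrite <- ln_1 in height_pos.
      pose proof (ln_lt_inv 1 (pz q) ltac:(lra) q_pos height_pos). lra. }
    pose proof (Rabs_le_2_Rabs_sin theta theta_range cos_ge0).
    pose proof (Rabs_le_sqrt_sum_sq (sin theta) (sinh x)).
    rewrite Rplus_comm in bound. lra.
Qed.
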